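(* The allocation rule $x$ of the two-bidder auction defined below is monotone (for each $i$ and fixed $v_{-i}$, $v_i\mapsto x_i(v_i,v_{-i})$ is non-decreasing), and the Myerson payments $\pi_i(v)=v_ix_i(v)-\int_0^{v_i}x_i(u,v_{-i})\,du$ satisfy $\pi_i(v)\le 1$ for all $v$ and $i$.
   Context: One divisible good, two bidders with values per unit $v_1,v_2\ge0$ and known budgets $B_1=B_2=1$. The allocation $x(v_1,v_2)=(x_1,x_2)$ is symmetric ($x(v_1,v_2)$ is obtained from $x(v_2,v_1)$ by swapping coordinates) and for $v_1\ge v_2$ is given by the first applicable rule: if $v_1=v_2$, $x=(\frac12,\frac12)$; else if $v_2\le\frac13$, $x=(1,0)$; else if $\frac13\le v_2\le1$, $x=(\frac14+\frac1{4v_2},\frac34-\frac1{4v_2})$; else ($v_2\ge1$) $x=(\frac12,\frac12)$. *)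

From Stdlib Require Import Reals Lra.
Open Scope R_scope.

(* Allocation when the first argument is the (weakly) higher value a >= b, a <> b:
   first applicable rule among v2 <= 1/3, 1/3 <= v2 <= 1, v2 >= 1. *)
Definition alloc_ge (a b : R) : R * R :=
  if Rle_dec b (1/3) then (1, 0)
  else if Rle_dec b 1 then (1/4 + 1/(4*b), 3/4 - 1/(4*b))
  else (1/2, 1/2).

Definition alloc (v1 v2 : R) : R * R :=
  if Req_EM_T v1 v2 then (1/2, 1/2)
  else if Rle_dec v2 v1 then alloc_ge v1 v2
  else let p := alloc_ge v2 v1 in (snd p, fst p).

Definition x1 (v1 v2 : R) : R := fst (alloc v1 v2).
Definition x2 (v1 v2 : R) : R := snd (alloc v1 v2).

From Stdlib Require Import Reals Lra FunctionalExtensionality.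
From Coquelicot Require Import Coquelicot.
Open Scope R_scope.

(* For a bidder with the lower value t, the allocation rule gives her the
   share  s(t) = 3/4 - 1/(4 c(t)),  where c(t) clamps t into [1/3, 1]; the
   higher bidder receives 1 - s(t), and ties split 1/2 : 1/2.  The function s
   is nondecreasing, takes values in [0, 1/2], equals 1/2 from t = 1 on, and
   is continuous (c is 1-Lipschitz and stays away from 0).  Hence:
   - monotonicity: along v1 = u, bidder 1 first receives s(u) <= 1/2, then 1/2
     at the tie, then the constant 1 - s(v2) >= 1/2;
   - integrability: u |-> x1(u, v2) coincides with the continuous s below v2
     and with a constant above v2;
   - payments: a general bound, for any integrable f with values in [0, 1]
     that is constant on [1, v], gives v f(v) - int_0^v f <= 1, and
     u |-> x1(u, v2) is such a function since it is constant on [1, +oo).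
   Bidder 2 is handled by the symmetry x2(v1, u) = x1(u, v1). *)

Definition clamp (t : R) : R := Rmax (1/3) (Rmin t 1).

Lemma clamp_low (t : R) : t <= 1/3 -> clamp t = 1/3.
Proof.
  intro Ht. unfold clamp.
  rewrite Rmin_left by lra. apply Rmax_left; lra.
Qed.

Lemma clamp_mid (t : R) : 1/3 <= t <= 1 -> clamp t = t.
Proof.
  intro Ht. unfold clamp.
  rewrite Rmin_left by lra. apply Rmax_right; lra.
Qed.

Lemma clamp_high (t : R) : 1 <= t -> clamp t = 1.
Proof.
  intro Ht. unfold clamp.
  rewrite Rmin_right by lra. apply Rmax_right; lra.
Qed.

Lemma clamp_range (t : R) : 1/3 <= clamp t <= 1.
Proof.
  destruct (Rle_dec t (1/3)); [rewrite clamp_low by lra; lra|].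
  destruct (Rle_dec t 1); [rewrite clamp_mid by lra; lra|].
  rewrite clamp_high by lra; lra.
Qed.

Lemma clamp_mono (s t : R) : s <= t -> clamp s <= clamp t.
Proof.
  intro Hst. unfold clamp.
  apply Rle_max_compat_l, Rle_min_compat_r; exact Hst.
Qed.

Lemma clamp_lipschitz (s t : R) : Rabs (clamp s - clamp t) <= Rabs (s - t).
Proof.
  unfold clamp, Rmax, Rmin.
  repeat destruct Rle_dec; unfold Rabs; repeat destruct Rcase_abs; lra.
Qed.

Lemma clamp_continuous (t : R) : continuity_pt clamp t.
Proof.
  intros eps Heps. exists eps. split; [exact Heps|].
  intros s [_ Hs]. unfold R_dist in *.
  eapply Rle_lt_trans; [apply clamp_lipschitz | exact Hs].
Qed.

(* The share of the bidder with the lower value t (t different from the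
   other value); the bidder with the higher value receives 1 - losing_share t. *)
Definition losing_share (t : R) : R := 3/4 - 1/(4 * clamp t).

Lemma alloc_ge_losing_share (a b : R) :
  alloc_ge a b = (1 - losing_share b, losing_share b).
Proof.
  unfold alloc_ge, losing_share.
  destruct (Rle_dec b (1/3)).
  - rewrite clamp_low by lra. f_equal; field.
  - destruct (Rle_dec b 1).
    + rewrite clamp_mid by lra. f_equal; field; lra.
    + rewrite clamp_high by lra. f_equal; field.
Qed.

Lemma losing_share_range (t : R) : 0 <= losing_share t <= 1/2.
Proof.
  unfold losing_share. pose proof (clamp_range t) as Hc.
  assert (Hinv : 1 <= / clamp t <= 3).
  { split.
    - rewrite <- Rinv_1. apply Rinv_le_contravar; lra.
    - replace 3 with (/ (1/3)) by field. apply Rinv_le_contravar; lra. }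
  replace (1 / (4 * clamp t)) with (/4 * / clamp t) by (field; lra). lra.
Qed.

Lemma losing_share_mono (s t : R) : s <= t -> losing_share s <= losing_share t.
Proof.
  intro Hst. unfold losing_share.
  pose proof (clamp_range s). pose proof (clamp_mono s t Hst).
  assert (/ clamp t <= / clamp s) by (apply Rinv_le_contravar; lra).
  replace (1 / (4 * clamp s)) with (/4 * / clamp s) by (field; lra).
  replace (1 / (4 * clamp t)) with (/4 * / clamp t)
    by (pose proof (clamp_range t); field; lra).
  lra.
Qed.

Lemma losing_share_high (t : R) : 1 <= t -> losing_share t = 1/2.
Proof. intro Ht. unfold losing_share. rewrite clamp_high by lra. field. Qed.

Lemma losing_share_continuous (t : R) : continuity_pt losing_share t.
Proof.
  unfold losing_share, Rdiv.
  apply continuity_pt_minus; [apply continuity_pt_const; intros ? ?; reflexivity|].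
  apply continuity_pt_mult; [apply continuity_pt_const; intros ? ?; reflexivity|].
  apply (continuity_pt_inv (fun s => 4 * clamp s)).
  - apply continuity_pt_scal, clamp_continuous.
  - pose proof (clamp_range t). lra.
Qed.

Lemma x1_losing (u v2 : R) : u < v2 -> x1 u v2 = losing_share u.
Proof.
  intro H. unfold x1, alloc.
  destruct (Req_EM_T u v2); [lra|].
  destruct (Rle_dec v2 u); [lra|].
  rewrite alloc_ge_losing_share. reflexivity.
Qed.

Lemma x1_tie (u v2 : R) : u = v2 -> x1 u v2 = 1/2.
Proof.
  intro H. unfold x1, alloc.
  destruct (Req_EM_T u v2); [reflexivity|lra].
Qed.

Lemma x1_winning (u v2 : R) : v2 < u -> x1 u v2 = 1 - losing_share v2.
Proof.
  intro H. unfold x1, alloc.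
  destruct (Req_EM_T u v2); [lra|].
  destruct (Rle_dec v2 u); [|lra].
  rewrite alloc_ge_losing_share. reflexivity.
Qed.

Lemma x2_x1 (v1 u : R) : x2 v1 u = x1 u v1.
Proof.
  unfold x1, x2, alloc.
  destruct (Req_EM_T v1 u); destruct (Req_EM_T u v1); try reflexivity; try lra.
  destruct (Rle_dec u v1); destruct (Rle_dec v1 u); try lra; reflexivity.
Qed.

Lemma x1_range (u v2 : R) : 0 <= x1 u v2 <= 1.
Proof.
  pose proof (losing_share_range u) as Hu. pose proof (losing_share_range v2) as Hv2.
  destruct (Rtotal_order u v2) as [H|[H|H]].
  - rewrite x1_losing by exact H. lra.
  - rewrite x1_tie by exact H. lra.
  - rewrite x1_winning by exact H. lra.
Qed.

Lemma x1_mono (v2 a b : R) : a <= b -> x1 a v2 <= x1 b v2.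
Proof.
  intro Hab.
  pose proof (losing_share_range a). pose proof (losing_share_range v2).
  destruct (Rtotal_order b v2) as [Hb|[Hb|Hb]].
  - rewrite !x1_losing by lra. apply losing_share_mono; exact Hab.
  - rewrite (x1_tie b) by exact Hb.
    destruct (Req_dec a v2); [rewrite x1_tie by assumption | rewrite x1_losing by lra]; lra.
  - rewrite (x1_winning b) by exact Hb.
    destruct (Rtotal_order a v2) as [Ha|[Ha|Ha]].
    + rewrite x1_losing by exact Ha. lra.
    + rewrite x1_tie by exact Ha. lra.
    + rewrite x1_winning by exact Ha. lra.
Qed.

Lemma x1_high (u v2 : R) : 1 <= u -> x1 u v2 = 1 - losing_share v2.
Proof.
  intro Hu. destruct (Rtotal_order u v2) as [H|[H|H]].
  - rewrite x1_losing, !losing_share_high by lra. lra.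
  - rewrite x1_tie, losing_share_high by lra. lra.
  - apply x1_winning; exact H.
Qed.

Lemma ex_RInt_agree_continuous (f g : R -> R) (a b : R) : a <= b ->
  (forall x, a < x < b -> g x = f x) ->
  (forall x, a <= x <= b -> continuity_pt g x) -> ex_RInt f a b.
Proof.
  intros Hab Hagree Hcont.
  apply (ex_RInt_ext g).
  - intros x Hx. rewrite Rmin_left, Rmax_right in Hx by lra. apply Hagree; exact Hx.
  - apply ex_RInt_Reals_1, continuity_implies_RiemannInt; assumption.
Qed.

(* u |-> x1(u, v2) is losing_share before min(v, v2) and constant after. *)
Lemma x1_ex_RInt (v v2 : R) : 0 <= v -> 0 <= v2 -> ex_RInt (fun u => x1 u v2) 0 v.
Proof.
  intros Hv Hv2. set (m := Rmin v v2).
  assert (Hm : 0 <= m <= v) by (split; [apply Rmin_glb | apply Rmin_l]; lra).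
  apply (ex_RInt_Chasles_0 _ 0 m v Hm).
  - apply (ex_RInt_agree_continuous _ losing_share); [lra| |].
    + intros x Hx. symmetry. apply x1_losing.
      pose proof (Rmin_r v v2) as Hmv2. fold m in Hmv2. lra.
    + intros x _. apply losing_share_continuous.
  - apply (ex_RInt_agree_continuous _ (fun _ => 1 - losing_share v2)); [lra| |].
    + intros x Hx. symmetry. apply x1_winning.
      unfold m, Rmin in Hx. destruct (Rle_dec v v2); lra.
    + intros x _. apply continuity_pt_const. intros ? ?; reflexivity.
Qed.

Lemma payment_le_one (f : R -> R) (v : R) : 0 <= v -> ex_RInt f 0 v ->
  (forall u, 0 <= u <= v -> 0 <= f u <= 1) ->
  (forall u, 1 <= u <= v -> f u = f v) ->
  v * f v - RInt f 0 v <= 1.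
Proof.
  intros Hv Hint Hrange Hconst.
  pose proof (Hrange v (conj Hv (Rle_refl v))) as Hfv.
  destruct (Rle_dec v 1) as [Hle|Hgt].
  - assert (0 <= RInt f 0 v) by (apply RInt_ge_0; auto; intros; apply Hrange; lra).
    nra.
  - assert (Hsplit : RInt f 0 v = RInt f 0 1 + RInt f 1 v).
    { symmetry. apply (RInt_Chasles f 0 1 v).
      - apply (ex_RInt_Chasles_1 f 0 1 v); [lra | exact Hint].
      - apply (ex_RInt_Chasles_2 f 0 1 v); [lra | exact Hint]. }
    assert (Hhead : 0 <= RInt f 0 1).
    { apply RInt_ge_0; [lra| |intros; apply Hrange; lra].
      apply (ex_RInt_Chasles_1 f 0 1 v); [lra | exact Hint]. }
    assert (Htail : RInt f 1 v = (v - 1) * f v).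
    { rewrite (RInt_ext f (fun _ => f v)).
      - rewrite RInt_const. reflexivity.
      - intros x Hx. rewrite Rmin_left, Rmax_right in Hx by lra. apply Hconst; lra. }
    lra.
Qed.

Lemma x1_payment (v1 v2 : R) (pr : Riemann_integrable (fun u => x1 u v2) 0 v1) :
  0 <= v1 -> 0 <= v2 -> v1 * x1 v1 v2 - RiemannInt pr <= 1.
Proof.
  intros Hv1 Hv2. rewrite <- RInt_Reals.
  apply (payment_le_one (fun u => x1 u v2)); [exact Hv1 | apply x1_ex_RInt; assumption | |].
  - intros u _. apply x1_range.
  - intros u Hu. rewrite !x1_high by lra. reflexivity.
Qed.

Theorem mainTheorem11 :
  (forall v2 a b : R, 0 <= v2 -> 0 <= a -> a <= b -> x1 a v2 <= x1 b v2) /\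
  (forall v1 a b : R, 0 <= v1 -> 0 <= a -> a <= b -> x2 v1 a <= x2 v1 b) /\
  (forall v1 v2 : R, 0 <= v1 -> 0 <= v2 ->
     inhabited (Riemann_integrable (fun u => x1 u v2) 0 v1) /\
     (forall pr : Riemann_integrable (fun u => x1 u v2) 0 v1,
        v1 * x1 v1 v2 - RiemannInt pr <= 1)) /\
  (forall v1 v2 : R, 0 <= v1 -> 0 <= v2 ->
     inhabited (Riemann_integrable (fun u => x2 v1 u) 0 v2) /\
     (forall pr : Riemann_integrable (fun u => x2 v1 u) 0 v2,
        v2 * x2 v1 v2 - RiemannInt pr <= 1)).
Proof.
  split; [|split; [|split]].
  - intros v2 a b _ _ Hab. apply x1_mono; exact Hab.
  - intros v1 a b _ _ Hab. rewrite !x2_x1. apply x1_mono; exact Hab.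
  - intros v1 v2 Hv1 Hv2. split.
    + constructor. apply ex_RInt_Reals_0, x1_ex_RInt; assumption.
    + intro pr. apply x1_payment; assumption.
  - intros v1 v2 Hv1 Hv2.
    assert (Hswap : (fun u => x2 v1 u) = (fun u => x1 u v1)).
    { apply functional_extensionality. intro u. apply x2_x1. }
    rewrite Hswap, x2_x1. split.
    + constructor. apply ex_RInt_Reals_0, x1_ex_RInt; assumption.
    + intro pr. apply x1_payment; assumption.
Qed.
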